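(* Let $W=\mathrm{des}(\pi)$ and $W^\ast=\mathrm{des}(\pi^\ast)$, where $\pi^\ast$ is constructed from $\pi$ as described in the context. Then $W^\ast$ has the $W$-size biased distribution.
   Context: Let $h\ge 2$, let $n_1,\dots,n_h$ be positive integers, $n=n_1+\dots+n_h\ge 4$, and let $\pi$ be a uniformly distributed permutation of the multiset $\{1^{n_1},\dots,h^{n_h}\}$ (a sequence $(\pi(1),\dots,\pi(n))$ in which each $a$ occurs $n_a$ times, all such sequences equally likely). $\mathrm{des}(\pi)$ is the number of $i\in\{1,\dots,n-1\}$ with $\pi(i)>\pi(i+1)$. For a nonnegative integrable random variable $W$ with $\mathbb{E}W>0$, a random variable $W^\ast$ has the $W$-size biased distribution if $\mathbb{E}(Wf(W))=\mathbb{E}W\,\mathbb{E}f(W^\ast)$ for all continuous $f$ for which the left side exists. Construction of $\pi^\ast$: Let $I$ be uniformly distributed over $\{(1,2),(2,3),\dots,(n-1,n)\}$; let $J=(a,b)$, for $h\ge a>b\ge 1$, with probability $n_an_b/\sum_{c<d}n_cn_d$; $\pi,I,J$ are independent. Write $I=(i,j)$ with $j=i+1$. If $\pi(i)>\pi(j)$, set $\pi^\ast=\pi$. If $\pi(i)\le\pi(j)$ and $J=(a,b)$: choose $i^\ast$ uniformly from $\{k:\pi(k)=a\}$ and $j^\ast$ uniformly from $\{k:\pi(k)=b\}$, independently of each other and of all else. Then: (1) if $\{i,j\}\cap\{i^\ast,j^\ast\}=\emptyset$, or $i=i^\ast,j\ne j^\ast$, or $i\ne i^\ast,j=j^\ast$,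 obtain $\pi^\ast$ from $\pi$ by exchanging the entries at positions $i$ and $i^\ast$ and exchanging the entries at positions $j$ and $j^\ast$; (2) if $i=j^\ast$ and $j=i^\ast$, exchange the entries at positions $i$ and $j$; (3) if $i=j^\ast$, $j\ne i^\ast$, set $\pi^\ast(i)=\pi(i^\ast)$, $\pi^\ast(j)=\pi(i)$, $\pi^\ast(i^\ast)=\pi(j)$, and $\pi^\ast(k)=\pi(k)$ for $k\notin\{i,j,i^\ast\}$; (4) if $i\ne j^\ast$, $j=i^\ast$, set $\pi^\ast(i)=\pi(j)$, $\pi^\ast(j)=\pi(j^\ast)$, $\pi^\ast(j^\ast)=\pi(i)$, and $\pi^\ast(k)=\pi(k)$ for $k\notin\{i,j,j^\ast\}$. *)

From HB Require Import structures.
From mathcomp Require Import all_boot all_order all_algebra.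
From mathcomp Require Import all_classical all_reals all_analysis.
Set Implicit Arguments. Unset Strict Implicit. Unset Printing Implicit Defensive.
Import Order.TTheory GRing.Theory Num.Theory.
Import numFieldNormedType.Exports.

(* Conventions: positions 1..n are 'I_n (position k+1 <-> ordinal k);
   letters 1..h are 'I_h (letter a+1 <-> ordinal a), order-preserving.
   A word pi is a finite function 'I_n -> 'I_h. *)

Section Defs.
Variables (h n : nat).
Local Notation word := {ffun 'I_n -> 'I_h}.

Definition mperms (nn : 'I_h -> nat) : {set word} :=
  [set p : word | [forall a : 'I_h, #|[set k | p k == a]| == nn a]].

Definition des (p : word) : nat :=
  #|[set ij : 'I_n * 'I_n | (val ij.2 == (val ij.1).+1) && (p ij.2 < p ij.1)]|.

Definition xch (p : word) (x y : 'I_n) : word :=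
  [ffun k => if k == x then p y else if k == y then p x else p k].

Definition pistar (p : word) (i j istar jstar : 'I_n) : word :=
  if p j < p i then p
  else if [|| [&& i != istar, i != jstar, j != istar & j != jstar],
              (i == istar) && (j != jstar) | (i != istar) && (j == jstar)]
  then xch (xch p i istar) j jstar
  else if (i == jstar) && (j == istar) then xch p i j
  else if (i == jstar) && (j != istar) then
    [ffun k => if k == i then p istar else if k == j then p i
               else if k == istar then p j else p k]
  else if (i != jstar) && (j == istar) then
    [ffun k => if k == i then p j else if k == j then p jstar
               else if k == jstar then p i else p k]
  else p (* unreachable: i = istar, j = jstar is impossible since p istar > p jstar *).

(* normalising constant for J: sum_{c<d} n_c n_d *)
Definition Jnorm (nn : 'I_h -> nat) : nat :=
  \sum_(c : 'I_h) \sum_(d : 'I_h | c < d) nn c * nn d.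

(* outcome (pi, I=(i,j), J=(a,b), istar, jstar) *)
Definition outcome := (word * ('I_n * 'I_n) * ('I_h * 'I_h) * ('I_n * 'I_n))%type.

Definition out_supp (nn : 'I_h -> nat) (w : outcome) : bool :=
  let: (p, (i, j), (a, b), (ist, jst)) := w in
  [&& p \in mperms nn, val j == (val i).+1, b < a, p ist == a & p jst == b].

Variable R : realType.

(* weight = P(pi) P(I) P(J=(a,b)) P(istar) P(jstar) *)
Definition out_weight (nn : 'I_h -> nat) (w : outcome) : R :=
  let: (p, (i, j), (a, b), (ist, jst)) := w in
  (#|mperms nn|%:R)^-1 * ((n - 1)%:R)^-1 *
  ((nn a * nn b)%:R / (Jnorm nn)%:R) * (nn a)%:R^-1 * (nn b)%:R^-1.

Definition Wstar (w : outcome) : nat :=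
  let: (p, (i, j), (a, b), (ist, jst)) := w in des (pistar p i j ist jst).

Definition E_W (nn : 'I_h -> nat) (g : R -> R) : R :=
  (#|mperms nn|%:R)^-1 * \sum_(p in mperms nn) g (des p)%:R.

Definition E_Wstar (nn : 'I_h -> nat) (g : R -> R) : R :=
  \sum_(w : outcome | out_supp nn w) out_weight nn w * g (Wstar w)%:R.

End Defs.

From HB Require Import structures.
From mathcomp Require Import all_boot all_order all_algebra.
From mathcomp Require Import all_classical all_reals all_analysis.
From mathcomp Require Import perm zify.
Import Order.TTheory GRing.Theory Num.Theory.
Import numFieldNormedType.Exports.

(* Fix the adjacent pair I = (i, j) and write pi' for pistar.  Record an outcome
   (pi, J, istar, jstar) as (pi', x, y), where x, y are the positions at which pi' carries
   the old entries pi(i), pi(j).  This is a bijection onto the triples in which pi' has a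
   descent at I and x <> y: pi is recovered by moving those entries back to i, j, and
   pi' = pi exactly when pi'(x) > pi'(y).  All outcomes have the same weight, so
   E g(W') is proportional to sum_pi des(pi) n(n-1) g(des pi): the size-bias identity. *)

Lemma card_offdiag (T : finType) :
  #|[set xy : T * T | xy.1 != xy.2]| = (#|T| * #|T|.-1)%N.
Proof.
rewrite -sum1dep_card.
rewrite (eq_bigl (fun xy : T * T => xpredT xy.1 && (xy.1 != xy.2))) //.
rewrite -(pair_big_dep xpredT (fun x y => x != y) (fun _ _ => 1%N)) /=.
rewrite (eq_bigr (fun=> #|T|.-1)) ?sum_nat_const ?cardT //.
move=> x _; rewrite sum1dep_card -cardT -(cardsC1 x); apply: eq_card => y.
by rewrite !inE eq_sym.
Qed.

Lemma card_adjacent n :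
  #|[set ij : 'I_n * 'I_n | val ij.2 == (val ij.1).+1]| = n.-1.
Proof.
rewrite -sum1dep_card.
rewrite (eq_bigl (fun ij : 'I_n * 'I_n => xpredT ij.1 && (val ij.2 == (val ij.1).+1))) //.
rewrite -(pair_big_dep xpredT (fun (i j : 'I_n) => val j == (val i).+1) (fun _ _ => 1%N)) /=.
have card_succ (i : 'I_n) : (\sum_(j : 'I_n | val j == i.+1) 1 = (i.+1 < n))%N.
  case: ltnP => [lt_in|le_ni]; first by rewrite (big_pred1 (Ordinal lt_in)).
  rewrite big_pred0 // => j; apply/negbTE/eqP => j_eq.
  by move: (ltn_ord j); rewrite j_eq ltnNge le_ni.
rewrite (eq_bigr _ (fun i _ => card_succ i)) {card_succ}.
case: n => [|m]; first by rewrite big_ord0.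
rewrite big_ord_recr /= ltnn addn0 (eq_bigr (fun=> 1%N)) => [|i _]; last by rewrite ltnS ltn_ord.
by rewrite sum_nat_const card_ord muln1.
Qed.

Section SizeBiasCoupling.
Set Implicit Arguments. Unset Strict Implicit.
Variables (h n : nat) (nn : 'I_h -> nat).
Local Notation word := {ffun 'I_n -> 'I_h}.

Lemma ord_neq_succ (i j : 'I_n) : val j = (val i).+1 -> i != j.
Proof. by move=> ji; apply/eqP => ij; rewrite ij in ji; lia. Qed.

Lemma xchE (p : word) x y k :
  xch p x y k = if k == x then p y else if k == y then p x else p k.
Proof. by rewrite ffunE. Qed.

Lemma mperms_xch (p : word) x y : p \in mperms n nn -> xch p x y \in mperms n nn.
Proof.
rewrite !inE => /forallP p_nn; apply/forallP => a.
have -> : [set k | xch p x y k == a] = tperm x y @^-1: [set k | p k == a].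
  apply/setP => k; rewrite !inE xchE.
  case: tpermP => [->|->|/eqP/negPf -> /eqP/negPf ->] //; first by rewrite eqxx.
  by have [->|_] := eqVneq y x; rewrite ?eqxx.
by rewrite card_preimset //; apply: perm_inj.
Qed.

(* Splits on every coincidence among the position variables and on every branch of [pistar]
   and [xch]; the impossible cases are refuted by order or arithmetic contradictions. *)
Ltac position_cases :=
  repeat (first
    [ by []
    | apply: mperms_xch
    | match goal with |- is_true (_ && _) => apply/andP; split end
    | progress (rewrite /pistar /= ?xchE ?ffunE ?eqxx /=)
    | match goal with
      | H : is_true (?a != ?a) |- _ => by rewrite eqxx in H
      | H : is_true (?a < ?a)%N |- _ => by rewrite ltnn in H
      | H1 : is_true (?a < ?b)%N, H2 : is_true (?b < ?a)%N |- _ =>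
          by move: (ltn_trans H1 H2); rewrite ltnn
      | H1 : is_true (?a < ?b)%N, H2 : is_true (~~ (?a < ?b)%N) |- _ =>
          by rewrite H1 in H2
      | H : is_true ?a |- is_true ?a => exact H
      | H : ?a = ?a |- _ => clear H
      | H : is_true (_ && _) |- _ => case/andP: H => ? ?
      | H : is_true (?a == ?b) |- _ => move/eqP: H => H; subst
      | H : is_true (?a != ?b) |- context [?a == ?b] => rewrite (negbTE H)
      | H : is_true (?a != ?b) |- context [?b == ?a] => rewrite [b == a]eq_sym (negbTE H)
      end
    | match goal with
      | |- (_, _) = (_, _) => congr pair
      | |- @eq (finfun_of _) _ _ => apply/ffunP => ?
      end
    | match goal with |- context [?a == ?b] => is_var a; is_var b;
        case: (eqVneq a b) => [?|?]; try subst end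
    | case: ifPn => ?
    | by exfalso; lia
    | by apply/eqP; lia ]).

Lemma mperms_pistar (p : word) i j ist jst :
  p \in mperms n nn -> i != j -> ist != jst -> pistar p i j ist jst \in mperms n nn.
Proof.
move=> p_nn ij ist_jst; rewrite /pistar.
case: ifP => _ //; case: ifP => _; first by do 2 apply: mperms_xch.
case: ifP => _; first exact: mperms_xch.
case: ifP => [/andP [/eqP jst_i j_ist]|_].
  have -> : [ffun k => if k == i then p ist else if k == j then p i
                       else if k == ist then p j else p k] = xch (xch p i ist) j ist.
    by subst jst; apply/ffunP => k; position_cases.
  by do 2 apply: mperms_xch.
case: ifP => [/andP [i_jst /eqP ist_j]|_] //.
have -> : [ffun k => if k == i then p j else if k == j then p jst
                     else if k == jst then p i else p k] = xch (xch p i j) j jst.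
  by subst ist; apply/ffunP => k; position_cases.
by do 2 apply: mperms_xch.
Qed.

Definition marked := (word * ('I_n * 'I_n) * ('I_n * 'I_n))%type.

Definition marked_descent (t : marked) : bool :=
  let: (q, (i, j), (x, y)) := t in
  [&& q \in mperms n nn, val j == (val i).+1, q j < q i & x != y]%N.

Definition marked_of_outcome (w : outcome h n) : marked :=
  let: (p, (i, j), _, (ist, jst)) := w in
  (pistar p i j ist jst, (i, j),
   if p j < p i then (ist, jst)
   else if (i == jst) && (j != ist) then (j, ist)
   else if (j == ist) && (i != jst) then (jst, i)
   else (ist, jst))%N.

Definition outcome_of_marked (t : marked) : outcome h n :=
  let: (q, (i, j), (x, y)) := t in
  let: (p, ist, jst) :=
    if q y < q x then (q, x, y)
    else if (x == j) && (y == i) then (xch q i j, j, i)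
    else if x == j then (xch (xch q i j) j y, y, i)
    else if y == i then (xch (xch q i j) i x, j, x)
    else if x == i then (xch q j y, i, y)
    else if y == j then (xch q i x, x, j)
    else (xch (xch q j y) i x, x, y) in
  (p, (i, j), (p ist, p jst), (ist, jst))%N.

Lemma marked_descent_of_outcome w :
  out_supp nn w -> marked_descent (marked_of_outcome w).
Proof.
case: w => [[[p [i j]] [a b]] [ist jst]] /= /and5P [p_nn /eqP ij_adj ba pa pb].
have ij := ord_neq_succ ij_adj.
have ist_jst : ist != jst by apply/eqP => E; move: ba; rewrite -(eqP pa) -(eqP pb) E ltnn.
case: ifPn => ?; last case: ifPn => ?; last case: ifPn => ?.
all: apply/and4P; split; first exact: mperms_pistar.
all: position_cases.
Qed.

Lemma out_supp_of_marked t : marked_descent t -> out_supp nn (outcome_of_marked t).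
Proof.
case: t => [[q [i j]] [x y]] /= /and4P [q_nn /eqP ij_adj qji xy].
have ij := ord_neq_succ ij_adj.
position_cases.
Qed.

Lemma marked_of_outcomeK w :
  out_supp nn w -> outcome_of_marked (marked_of_outcome w) = w.
Proof.
case: w => [[[p [i j]] [a b]] [ist jst]] /= /and5P [_ /eqP ij_adj ba pa pb].
have ij := ord_neq_succ ij_adj.
have ist_jst : ist != jst by apply/eqP => E; move: ba; rewrite -(eqP pa) -(eqP pb) E ltnn.
clear ij_adj; position_cases.
Qed.

Lemma outcome_of_markedK t :
  marked_descent t -> marked_of_outcome (outcome_of_marked t) = t.
Proof.
case: t => [[q [i j]] [x y]] /= /and4P [_ /eqP ij_adj qji xy].
have ij := ord_neq_succ ij_adj.
clear ij_adj; position_cases.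
Qed.

Local Open Scope ring_scope.

Lemma sum_Wstar_marked (V : nmodType) (G : nat -> V) :
  \sum_(w : outcome h n | out_supp nn w) G (Wstar w) =
  \sum_(t : marked | marked_descent t) G (des t.1.1).
Proof.
rewrite (reindex_onto outcome_of_marked marked_of_outcome);
  last exact: marked_of_outcomeK.
apply: eq_big => [t|t /andP [_ /eqP t_eq]].
  apply/idP/idP => [/andP [w_supp /eqP <-]|t_desc]; first exact: marked_descent_of_outcome.
  by rewrite out_supp_of_marked //= (outcome_of_markedK t_desc) eqxx.
by rewrite -[in RHS]t_eq; case: (outcome_of_marked t) => [[[? [? ?]] [? ?]] [? ?]].
Qed.

Lemma sum_marked_descent (V : nmodType) (F : word -> V) :
  \sum_(t : marked | marked_descent t) F t.1.1 =
  \sum_(q in mperms n nn) F q *+ (des q * (n * n.-1)).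
Proof.
pose offdiag := [set xy : 'I_n * 'I_n | xy.1 != xy.2].
pose descents (q : word) :=
  [set ij : 'I_n * 'I_n | (val ij.2 == (val ij.1).+1) && (q ij.2 < q ij.1)%N].
transitivity (\sum_(q in mperms n nn) \sum_(ij in descents q) \sum_(xy in offdiag) F q).
  rewrite pair_big_dep pair_big_dep; apply: eq_bigl => -[[q [i j]] [x y]].
  by rewrite /= !inE !andbA.
apply: eq_bigr => q _.
by rewrite !sumr_const card_offdiag card_ord -mulrnA mulnC.
Qed.

Lemma card_letter_pairs (p : word) a b : p \in mperms n nn ->
  #|[set st : 'I_n * 'I_n | (p st.1 == a) && (p st.2 == b)]| = (nn a * nn b)%N.
Proof.
rewrite inE => /forallP p_nn; rewrite -(eqP (p_nn a)) -(eqP (p_nn b)) -cardsX.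
by apply: eq_card => -[s t]; rewrite !inE.
Qed.

Lemma Jnorm_descending_pairs :
  (\sum_(ab : 'I_h * 'I_h | ab.2 < ab.1) nn ab.1 * nn ab.2)%N = Jnorm nn.
Proof.
have swap_inj : injective (fun ab : 'I_h * 'I_h => (ab.2, ab.1)) by move=> [? ?] [? ?] [-> ->].
rewrite /Jnorm pair_big_dep (reindex_inj swap_inj) /=.
by apply: eq_bigr => ab _; rewrite mulnC.
Qed.

Lemma card_out_supp :
  #|[set w : outcome h n | out_supp nn w]| = (#|mperms n nn| * (n.-1 * Jnorm nn))%N.
Proof.
pose adjacent := [set ij : 'I_n * 'I_n | val ij.2 == (val ij.1).+1].
pose letter_pairs (p : word) (ab : 'I_h * 'I_h) :=
  [set st : 'I_n * 'I_n | (p st.1 == ab.1) && (p st.2 == ab.2)].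
rewrite -sum1dep_card.
transitivity (\sum_(p in mperms n nn) \sum_(ij in adjacent)
  \sum_(ab : 'I_h * 'I_h | ab.2 < ab.1) \sum_(st in letter_pairs p ab) 1)%N.
  rewrite !pair_big_dep; apply: eq_bigl => -[[[p [i j]] [a b]] [ist jst]].
  by rewrite /= !inE !andbA.
rewrite -sum_nat_const; apply: eq_bigr => p p_nn.
rewrite -card_adjacent -sum_nat_const; apply: eq_bigr => ij _.
rewrite -Jnorm_descending_pairs; apply: eq_bigr => ab _.
by rewrite sum1_card card_letter_pairs.
Qed.
End SizeBiasCoupling.

Local Open Scope ring_scope.

Section Expectations.
Variables (R : realType) (h n : nat) (nn : 'I_h -> nat).

Lemma out_weight_uniform (w : outcome h n) : out_supp nn w ->
  out_weight R nn w = (#|[set w : outcome h n | out_supp nn w]|%:R)^-1.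
Proof.
case: w => [[[p [i j]] [a b]] [ist jst]] /= /and5P [p_nn _ _ pa pb].
have nn_neq0 c k : p k == c -> (nn c)%:R != 0 :> R.
  move=> pk; move: p_nn; rewrite inE => /forallP/(_ c)/eqP <-.
  by rewrite pnatr_eq0 -lt0n; apply/card_gt0P; exists k; rewrite inE.
rewrite card_out_supp subn1 !natrM !invfM -!mulrA; congr (_ * (_ * _)).
have := nn_neq0 _ _ pa; have := nn_neq0 _ _ pb.
set A := (nn a)%:R; set B := (nn b)%:R => B_neq0 A_neq0.
by rewrite [B * _]mulrCA (mulrCA A) [A^-1 * _]mulrC mulVKf // mulfV // mulr1.
Qed.

Lemma E_Wstar_uniform (g : R -> R) :
  E_Wstar n nn g = (\sum_(w : outcome h n | out_supp nn w) g (Wstar w)%:R) /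
                   #|[set w : outcome h n | out_supp nn w]|%:R.
Proof.
rewrite /E_Wstar mulr_suml; apply: eq_bigr => w w_supp.
by rewrite out_weight_uniform // mulrC.
Qed.

Lemma E_Wstar_size_bias (g : R -> R) : (1 < n)%N ->
  E_Wstar n nn g = (\sum_(q in mperms n nn) (des q)%:R * g (des q)%:R) /
                   \sum_(q in mperms n nn) (des q)%:R.
Proof.
move=> n_gt1.
have sum_Wstar (G : nat -> R) : \sum_(w : outcome h n | out_supp nn w) G (Wstar w) =
    (n * n.-1)%:R * \sum_(q in mperms n nn) (des q)%:R * G (des q).
  rewrite sum_Wstar_marked (sum_marked_descent _ (fun q => G (des q))) mulr_sumr.
  apply: eq_bigr => q _.
  by rewrite -[LHS]mulr_natl natrM mulrAC mulrC.
rewrite E_Wstar_uniform (sum_Wstar (fun k => g k%:R)) -sum1dep_card natr_sum.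
rewrite (sum_Wstar (fun=> 1)).
under [X in _ / (_ * X)]eq_bigr do rewrite mulr1.
by rewrite -mulf_div divff ?mul1r // pnatr_eq0 muln_eq0 negb_or -!lt0n; apply/andP; split; lia.
Qed.
End Expectations.

Theorem lemma2p14 (R : realType) (h n : nat) (nn : 'I_h -> nat) :
  (2 <= h)%N -> (forall a, 0 < nn a)%N -> n = (\sum_(a : 'I_h) nn a)%N -> (4 <= n)%N ->
  forall f : R -> R, continuous f ->
  @E_W h n R nn (fun x => x * f x) = @E_W h n R nn id * @E_Wstar h n R nn f.
Proof.
(* Only n >= 2 is used: the multiplicities met on the support of the construction are
   automatically positive, and when no word has a descent both sides vanish. *)
move=> _ _ _ n_ge4 f _.
rewrite /E_W E_Wstar_size_bias; last by lia.
set A := \sum_(q in mperms n nn) _ * _.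
set B := \sum_(q in mperms n nn) _.
have [B0|B_neq0] := eqVneq B 0; last by rewrite -mulrA [B * _]mulrCA divff // mulr1.
have A0 : A = 0 by apply: big1 => q q_nn; rewrite (psumr_eq0P _ B0) ?mul0r.
by rewrite A0 B0 !(mulr0, mul0r).
Qed.
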